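(* Let $\mathbf{H}\in\mathbb{R}^{m\times n}$ have full column rank, with rows indexed by sensors and columns by state variables. Let $\mathcal{S}_o\subseteq\{1,\dots,m\}$, let $\mathbf{H}_o$ be the submatrix of $\mathbf{H}$ consisting of the rows indexed by $\mathcal{S}_o$, and let $\mathcal{X}_o$ be the set of indices of the nonzero columns of $\mathbf{H}_o$. Suppose that (i) the state variables in $\mathcal{X}_o$ are observable with respect to $\mathcal{S}_o$; (ii) $\mathcal{C}\subseteq\mathcal{S}_o$ is a critical set with respect to $(\mathcal{S}_o,\mathcal{X}_o)$; (iii) the submatrix of $\mathbf{H}$ obtained by removing the rows indexed by $\mathcal{C}$ does not have full column rank. Let $\mathbf{U}_o\in\mathbb{R}^{|\mathcal{S}_o|\times|\mathcal{X}_o|}$ be a matrix whose columns form a basis of $\mathcal{R}(\mathbf{H}_o)$, and let $\bar{\mathbf{U}}_o$ be the submatrix of $\mathbf{U}_o$ obtained by removing the rows corresponding to sensors in $\mathcal{C}$. Then: (1) $\mathcal{N}(\bar{\mathbf{U}}_o)$ has dimension one; (2) for any nonzero $\mathbf{v}\in\mathcal{N}(\bar{\mathbf{U}}_o)$, the vector $\mathbf{a}\in\mathbb{R}^m$ with $a_i$ equal to the entry of $\mathbf{U}_o\mathbf{v}$ corresponding to sensor $i$ for $i\in\mathcal{C}$ and $a_i=0$ for $i\notin\mathcal{C}$ is an unobservable attack, i.e., $\mathbf{a}\neq\mathbf{0}$ and $\mathbf{a}\in\mathcal{R}(\mathbf{H})$.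
   Context: Linearized model $\mathbf{z}=\mathbf{H}\mathbf{x}+\mathbf{e}$. For a sensor set $\mathcal{S}$ and set of state variables $\mathcal{X}$, let $\mathbf{H}_{\mathcal{S}}$ keep only the rows of $\mathbf{H}$ in $\mathcal{S}$; the variables in $\mathcal{X}$ are observable with respect to $\mathcal{S}$ if every vector in $\mathcal{N}(\mathbf{H}_{\mathcal{S}})$ vanishes on all coordinates in $\mathcal{X}$. When this holds, $\mathcal{C}\subseteq\mathcal{S}$ is a critical set with respect to $(\mathcal{S},\mathcal{X})$ if the variables in $\mathcal{X}$ are not observable with respect to $\mathcal{S}\setminus\mathcal{C}$ but are observable with respect to $\mathcal{S}\setminus\mathcal{C}'$ for every strict subset $\mathcal{C}'\subsetneq\mathcal{C}$. An attack adding $\mathbf{a}$ to the data is unobservable iff $\mathbf{a}\neq\mathbf{0}$ and $\mathbf{a}\in\mathcal{R}(\mathbf{H})$. *)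

From HB Require Import structures.
From mathcomp Require Import all_boot all_order all_algebra.
Set Implicit Arguments. Unset Strict Implicit. Unset Printing Implicit Defensive.
Import Order.TTheory GRing.Theory Num.Theory.
Local Open Scope ring_scope.

Section Defs.
Variable R : realFieldType.
Variables m n : nat.

Definition observable (H : 'M[R]_(m, n)) (S : {set 'I_m}) (X : {set 'I_n}) : Prop :=
  forall x : 'cV[R]_n, (forall i, i \in S -> (H *m x) i 0 = 0) ->
    forall j, j \in X -> x j 0 = 0.

Definition critical_set (H : 'M[R]_(m, n)) (S : {set 'I_m}) (X : {set 'I_n})
    (C : {set 'I_m}) : Prop :=
  [/\ observable H S X, C \subset S, ~ observable H (S :\: C) X &
      forall C' : {set 'I_m}, C' \proper C -> observable H (S :\: C') X].

(* submatrix of the rows of A indexed by the set S (in increasing order) *)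
Definition rows_in (p : nat) (A : 'M[R]_(m, p)) (S : {set 'I_m}) : 'M[R]_(#|S|, p) :=
  rowsub (fun k : 'I_#|S| => enum_val k) A.

Definition full_col_rank (k p : nat) (A : 'M[R]_(k, p)) : bool := \rank A == p.

Definition nonzero_cols (H : 'M[R]_(m, n)) (S : {set 'I_m}) : {set 'I_n} :=
  [set j | [exists k : 'I_#|S|, rows_in H S k j != 0]].

(* the columns of U form a basis of the column space R(A) *)
Definition col_basis (k p q : nat) (U : 'M[R]_(k, q)) (A : 'M[R]_(k, p)) : bool :=
  ((U^T == A^T)%MS && row_free U^T).

Definition unobservable_attack (H : 'M[R]_(m, n)) (a : 'cV[R]_m) : Prop :=
  a != 0 /\ exists x : 'cV[R]_n, a = H *m x.
End Defs.

From HB Require Import structures.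
From mathcomp Require Import all_boot all_order all_algebra.
Set Implicit Arguments. Unset Strict Implicit. Unset Printing Implicit Defensive.
Import Order.TTheory GRing.Theory Num.Theory.
Local Open Scope ring_scope.

(* A probe [z] with [H z <> 0] whose measurements vanish outside [C] exists
   by (iii) and full column rank.  Minimality of [C] says that [C] minus one
   sensor [c] still observes [X_o]; hence any state unseen by [S_o \ C] is,
   on [S_o], the multiple of [z] that matches it at [c].  So the null space
   of [Ubar] is spanned by the coordinates of [H_o z], and every attack built
   from it is a multiple of [H z]. *)

Definition vanishes_on (R : zmodType) (p : nat) (y : 'cV[R]_p) (S : {set 'I_p}) :=
  forall i, i \in S -> y i 0 = 0.

Lemma vanishes_onS (R : zmodType) (p : nat) (y : 'cV[R]_p) (S T : {set 'I_p}) :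
  S \subset T -> vanishes_on y T -> vanishes_on y S.
Proof. by move=> ST yT i /(subsetP ST); apply: yT. Qed.

Lemma entry_subZ (R : pzRingType) (p : nat) (y y' : 'cV[R]_p) (l : R) i :
  (y - l *: y') i 0 = y i 0 - l * y' i 0.
Proof. by rewrite !mxE. Qed.

Section RowsIn.
Variables (R : realFieldType) (m q : nat).

Lemma rows_in_mulE (r : nat) (A : 'M[R]_(m, q)) (S : {set 'I_m}) (x : 'M_(q, r)) k j :
  (rows_in A S *m x) k j = (A *m x) (enum_val k) j.
Proof. by rewrite /rows_in mul_rowsub_mx !mxE. Qed.

Lemma rows_in_mul_eq0 (A : 'M[R]_(m, q)) (S : {set 'I_m}) (x : 'cV_q) :
  rows_in A S *m x = 0 <-> vanishes_on (A *m x) S.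
Proof.
split=> [Ax0 i iS | AxS].
  by rewrite -(enum_rankK_in iS iS) -rows_in_mulE Ax0 mxE.
by apply/matrixP=> k j; rewrite ord1 rows_in_mulE [RHS]mxE AxS ?enum_valP.
Qed.

Lemma vanishes_on_rows_inD (A : 'M[R]_(m, q)) (S T : {set 'I_m}) (x : 'cV_q) :
  vanishes_on (rows_in A S *m x) [set k | enum_val k \notin T] <->
  vanishes_on (A *m x) (S :\: T).
Proof.
split=> [AxS i | AxS k].
  rewrite inE => /andP[iT iS].
  by rewrite -(enum_rankK_in iS iS) -rows_in_mulE AxS // inE enum_rankK_in.
by rewrite inE rows_in_mulE => kT; apply: AxS; rewrite inE kT enum_valP.
Qed.

End RowsIn.

Section ColumnRank.
Variables (R : realFieldType) (p q : nat).

Lemma full_col_rankE (A : 'M[R]_(p, q)) : full_col_rank A = row_free A^T.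
Proof. by rewrite /full_col_rank /row_free mxrank_tr. Qed.

Lemma full_col_rank_mul_eq0 (A : 'M[R]_(p, q)) (x : 'cV_q) :
  full_col_rank A -> A *m x = 0 -> x = 0.
Proof.
rewrite full_col_rankE => Afree Ax0.
apply: trmx_inj; apply: (row_free_inj Afree).
by rewrite -trmx_mul Ax0 !trmx0 mul0mx.
Qed.

Lemma not_full_col_rank_kernel (A : 'M[R]_(p, q)) :
  ~~ full_col_rank A -> exists2 x : 'cV_q, x != 0 & A *m x = 0.
Proof.
rewrite full_col_rankE -kermx_eq0 => /rowV0Pn[u /sub_kermxP uA0 u_ne0].
exists u^T; first by rewrite trmx_eq0.
by apply: trmx_inj; rewrite trmx_mul trmxK uA0 trmx0.
Qed.

Lemma col_submx_mul (r : nat) (A : 'M[R]_(p, q)) (B : 'M[R]_(p, r)) :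
  (B^T <= A^T)%MS -> exists D : 'M_(q, r), B = A *m D.
Proof. by case/submxP=> D BA; exists D^T; rewrite -[B]trmxK BA trmx_mul trmxK. Qed.

Lemma rank_kermx_tr_eq1 (M : 'M[R]_(p, q)) (v0 : 'cV_q) :
  v0 != 0 -> M *m v0 = 0 -> (forall v, M *m v = 0 -> exists l, v = l *: v0) ->
  \rank (kermx M^T) = 1%N.
Proof.
move=> v0_ne0 Mv0 ker_v0.
have rank_v0 : \rank v0^T = 1%N by rewrite rank_rV trmx_eq0 v0_ne0.
apply/eqP; rewrite -rank_v0 eqn_leq !mxrankS //.
  by apply/sub_kermxP; rewrite -trmx_mul Mv0 trmx0.
apply/row_subP=> i; rewrite -[row i _]trmxK.
have /sub_kermxP uM := row_sub i (kermx M^T).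
have [l ->] : exists l, (row i (kermx M^T))^T = l *: v0.
  by apply: ker_v0; apply: trmx_inj; rewrite trmx_mul trmxK uM trmx0.
by rewrite linearZ /= scalemx_sub.
Qed.

End ColumnRank.

Section CriticalSet.
Variables (R : realFieldType) (m n : nat) (H : 'M[R]_(m, n)) (So C : {set 'I_m}).
Hypothesis C_minimal :
  forall C' : {set 'I_m}, C' \proper C -> observable H (So :\: C') (nonzero_cols H So).

Lemma vanishes_on_nonzero_cols (x : 'cV[R]_n) :
  vanishes_on x (nonzero_cols H So) -> vanishes_on (H *m x) So.
Proof.
move=> xX i iS; rewrite mxE big1 // => j _.
have [jX | jX] := boolP (j \in nonzero_cols H So); first by rewrite xX ?mulr0.
move: jX; rewrite inE negb_exists => /forallP/(_ (enum_rank_in iS i)).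
by rewrite negbK /rows_in mxE enum_rankK_in // => /eqP->; rewrite mul0r.
Qed.

Lemma critical_vanishes_on (c : 'I_m) (x : 'cV[R]_n) :
  c \in C -> vanishes_on (H *m x) (So :\: C) -> (H *m x) c 0 = 0 ->
  vanishes_on (H *m x) So.
Proof.
move=> cC xC xc; apply/vanishes_on_nonzero_cols/(C_minimal (properD1 cC)).
move=> i; rewrite !inE negb_and negbK => /andP[/orP[/eqP-> // | iC] iS].
by apply: xC; rewrite inE iC.
Qed.

Variables (z : 'cV[R]_n) (c : 'I_m).
Hypotheses (cC : c \in C) (zc : (H *m z) c 0 != 0)
  (z_off : vanishes_on (H *m z) (So :\: C)).

Lemma critical_proportional (x : 'cV[R]_n) :
  vanishes_on (H *m x) (So :\: C) ->
  {in So, forall i, (H *m x) i 0 = (H *m x) c 0 / (H *m z) c 0 * (H *m z) i 0}.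
Proof.
move=> xC i iS; set l := _ / _.
have : vanishes_on (H *m (x - l *: z)) So.
  apply: (critical_vanishes_on cC) => [j jC |];
    rewrite mulmxBr -scalemxAr entry_subZ.
    by rewrite xC // z_off // mulr0 subrr.
  by rewrite divfK ?subrr.
by rewrite mulmxBr -scalemxAr => /(_ i iS) /eqP; rewrite entry_subZ subr_eq0 => /eqP.
Qed.

Variables (q : nat) (U : 'M[R]_(#|So|, q)) (D : 'M[R]_(n, q)) (E : 'M[R]_(q, n)).
Hypotheses (UD : U = rows_in H So *m D) (HoE : rows_in H So = U *m E)
  (U_full : full_col_rank U) (CSo : C \subset So).

Let Ubar := rows_in U [set k | enum_val k \notin C].

Lemma Ubar_mul_eq0 (w : 'cV[R]_q) (y : 'cV[R]_n) :
  U *m w = rows_in H So *m y ->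
  Ubar *m w = 0 <-> vanishes_on (H *m y) (So :\: C).
Proof.
move=> Uwy; apply: iff_trans (rows_in_mul_eq0 _ _ _) _.
by rewrite Uwy; apply: vanishes_on_rows_inD.
Qed.

Lemma U_mul (v : 'cV[R]_q) : U *m v = rows_in H So *m (D *m v).
Proof. by rewrite UD mulmxA. Qed.

Lemma Ubar_kernel (v : 'cV[R]_q) :
  Ubar *m v = 0 -> v = (H *m (D *m v)) c 0 / (H *m z) c 0 *: (E *m z).
Proof.
move=> /(Ubar_mul_eq0 (U_mul v)) xC; set l := _ / _.
apply/eqP; rewrite -subr_eq0; apply/eqP/(full_col_rank_mul_eq0 U_full).
rewrite mulmxBr -scalemxAr mulmxA -HoE U_mul scalemxAr -mulmxBr.
apply/rows_in_mul_eq0=> i iS.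
by rewrite mulmxBr -scalemxAr entry_subZ (critical_proportional xC) ?subrr.
Qed.

Lemma Ubar_probe : Ubar *m (E *m z) = 0.
Proof.
have UEz : U *m (E *m z) = rows_in H So *m z by rewrite mulmxA -HoE.
exact/(Ubar_mul_eq0 UEz).
Qed.

Lemma probe_coord_neq0 : E *m z != 0.
Proof.
apply: contraNneq zc => Ez0.
have cSo := subsetP CSo c cC.
by rewrite -(enum_rankK_in cSo cSo) -rows_in_mulE HoE -mulmxA Ez0 mulmx0 mxE.
Qed.

Lemma rank_kermx_Ubar : \rank (kermx Ubar^T) = 1%N.
Proof.
apply: (rank_kermx_tr_eq1 probe_coord_neq0 Ubar_probe) => v /Ubar_kernel ->.
by eexists.
Qed.

Lemma critical_attack (v : 'cV[R]_q) (a : 'cV[R]_m) :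
  vanishes_on (H *m z) (~: C) -> v != 0 -> Ubar *m v = 0 ->
  (forall k, enum_val k \in C -> a (enum_val k) 0 = (U *m v) k 0) ->
  (forall i, i \notin C -> a i 0 = 0) ->
  unobservable_attack H a.
Proof.
move=> z_out v_ne0 Ubv aC a_out; pose l := (H *m (D *m v)) c 0 / (H *m z) c 0.
have l_ne0 : l != 0.
  by apply: contraNneq v_ne0 => l0; rewrite (Ubar_kernel Ubv) -/l l0 scale0r.
have a_eq : a = H *m (l *: z).
  apply/matrixP=> i j; rewrite ord1 -scalemxAr [RHS]mxE.
  have [iC | iC] := boolP (i \in C); last by rewrite a_out ?z_out ?inE ?mulr0.
  have iS := subsetP CSo i iC.
  rewrite -(enum_rankK_in iS iS) aC ?enum_rankK_in // U_mul rows_in_mulE.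
  rewrite enum_rankK_in // critical_proportional //.
  exact/(Ubar_mul_eq0 (U_mul v)).
split; last by exists (l *: z).
rewrite a_eq -scalemxAr scalemx_eq0 negb_or l_ne0 /=.
by apply: contraNneq zc => ->; rewrite mxE.
Qed.

End CriticalSet.

Theorem corollary1 (R : realFieldType) (m n : nat) (H : 'M[R]_(m, n))
    (So C : {set 'I_m}) (U : 'M[R]_(#|So|, #|nonzero_cols H So|)) :
  full_col_rank H ->
  observable H So (nonzero_cols H So) ->
  critical_set H So (nonzero_cols H So) C ->
  ~~ full_col_rank (rows_in H (~: C)) ->
  col_basis U (rows_in H So) ->
  (* Ubar = U with the rows of the sensors in C removed *)
  let K := [set k : 'I_#|So| | enum_val k \notin C] in
  let Ubar := rowsub (fun k : 'I_#|K| => enum_val k) U in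
  (* (1) the null space of Ubar, i.e. the row kernel of Ubar^T, has dimension one *)
  \rank (kermx Ubar^T) = 1%N /\
  (* (2) *)
  (forall v : 'cV[R]_#|nonzero_cols H So|, v != 0 -> Ubar *m v = 0 ->
     forall a : 'cV[R]_m,
       (forall k : 'I_#|So|, enum_val k \in C -> a (enum_val k) 0 = (U *m v) k 0) ->
       (forall i : 'I_m, i \notin C -> a i 0 = 0) ->
       unobservable_attack H a).
Proof.
(* Hypothesis (i) and the failure of observability in (ii) are implied: the
   probe [z] below is unseen by [So :\: C] but not by [So]. *)
move=> H_full _ [_ CSo _ C_minimal] HC_deficient /andP[/andP[UHo HoU] U_free] K Ubar.
have [z z_ne0 /rows_in_mul_eq0 z_out] := not_full_col_rank_kernel HC_deficient.
have [c cC zc] : exists2 c, c \in C & (H *m z) c 0 != 0.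
  have /matrix0Pn[c [j]] : H *m z != 0.
    by apply: contraNneq z_ne0 => /(full_col_rank_mul_eq0 H_full) ->.
  rewrite ord1 => zc; exists c => //.
  by apply: contraNT zc => cC; rewrite z_out ?inE.
have z_off := vanishes_onS (subsetDr So C) z_out.
have [D UD] := col_submx_mul UHo.
have [E HoE] := col_submx_mul HoU.
rewrite -full_col_rankE in U_free.
split; first exact: (rank_kermx_Ubar C_minimal cC zc z_off UD HoE U_free CSo).
move=> v v_ne0 Ubv a.
exact: (critical_attack C_minimal cC zc z_off UD HoE U_free CSo z_out v_ne0 Ubv).
Qed.
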